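(* Let $z>0$, $\zeta=(z/2)^{1/3}$. Let $(\sigma_n)_{n\in\mathbb Z}$ be functions of $z$ satisfying, for all $n\in\mathbb Z$, $$\sigma_{n+1}\sigma_{n-1}=\sqrt3\Big(z\big((\sigma_n')^2-\sigma_n\sigma_n''\big)-\sigma_n\sigma_n'\Big)\qquad(\,'=\mathrm d/\mathrm dz),$$ with $\sigma_0=\zeta^{-5/24}e^{-\frac98\zeta^4}$ and $\sigma_1=3^{1/4}\zeta^{7/24}e^{-\frac98\zeta^4-\frac32\zeta^2}$. Then for all $n\in\mathbb Z$, $$\sigma_n=\begin{cases}3^{1/4}\zeta^{7/24}e^{-\frac98\zeta^4-\frac32n\zeta^2}\rho_n(3\zeta^2),& n\text{ odd},\\ \zeta^{-5/24}e^{-\frac98\zeta^4-\frac32n\zeta^2}\rho_n(3\zeta^2),& n\text{ even},\end{cases}$$ where $\rho_n$ are the Ohyama polynomials.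
   Context: The Ohyama polynomials $\rho_n(s)$, $n\in\mathbb Z$, are defined by $\rho_0=\rho_1=\rho_{-1}=1$ and the recurrence $$(s+n)\rho_n^2-2s\rho_n\ddot\rho_n+2s(\dot\rho_n)^2-2\rho_n\dot\rho_n=\begin{cases}\rho_{n+1}\rho_{n-1},& n\text{ odd},\\ s\,\rho_{n+1}\rho_{n-1},& n\text{ even},\end{cases}$$ where dots denote $\mathrm d/\mathrm ds$ (it is known that each $\rho_n$ is a monic polynomial in $s$ with integer coefficients and $\rho_n(0)\ne0$). *)

From HB Require Import structures.
From mathcomp Require Import all_boot all_order all_algebra.
From mathcomp Require Import all_classical all_reals all_analysis.
Set Implicit Arguments. Unset Strict Implicit. Unset Printing Implicit Defensive.
Import Order.TTheory GRing.Theory Num.Theory.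
Local Open Scope ring_scope.

Definition int_odd (n : int) : bool := odd `|n|%N.

Definition ohyama_lhs {R : fieldType} (n : int) (p : {poly R}) : {poly R} :=
  ('X + (n%:~R)%:P) * p ^+ 2 - 2%:R%:P * 'X * p * p^`(2)
  + 2%:R%:P * 'X * (p^`()) ^+ 2 - 2%:R%:P * p * p^`().

Definition is_ohyama {R : fieldType} (rho : int -> {poly R}) : Prop :=
  [/\ rho 0 = 1, rho 1 = 1, rho (-1) = 1 &
   forall n : int,
     ohyama_lhs n (rho n) =
       if int_odd n then rho (n + 1) * rho (n - 1)
       else 'X * (rho (n + 1) * rho (n - 1))].

(* Write [toda t f f' f''] for t (f'^2 - f f'') - f f', so that the hypothesis
   reads sigma_(n+1) sigma_(n-1) = sqrt 3 * toda (sigma_n).  The Toda expression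
   satisfies toda (f g) = g^2 toda f + f^2 toda g, vanishes on constants and on
   powers t^a, and is multiplied by an explicit factor under a power substitution.
   Substituting z = 2 zeta^3 and s = 3 zeta^2 therefore turns toda of the claimed
   sigma_n into a multiple of the Ohyama operator applied to rho_n at s, and the
   Ohyama recurrence identifies it with the product of the claimed sigma_(n+1) and
   sigma_(n-1), divided by sqrt 3.  Induction upwards and downwards from n = 0, 1
   then determines sigma_(n+-1) from the recurrence wherever the claimed
   sigma_(n-+1) does not vanish.  Its zeros are those of the polynomial rho_(n-+1)
   at 3 zeta^2, which is nonzero because the Ohyama operator doubles the size of a
   polynomial; these zeros are isolated, and continuity fills them in. *)

From HB Require Import structures.
From mathcomp Require Import all_boot all_order all_algebra.
From mathcomp Require Import all_classical all_reals all_analysis.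
From mathcomp Require Import ring zify.
Set Implicit Arguments.
Unset Strict Implicit.
Unset Printing Implicit Defensive.

Import Order.TTheory GRing.Theory Num.Theory.
Import numFieldNormedType.Exports.
Local Open Scope ring_scope.

Lemma int_ind2 (P : int -> Prop) :
  P 0 -> P 1 ->
  (forall n, P (n - 1) -> P n -> P (n + 1)) ->
  (forall n, P n -> P (n + 1) -> P (n - 1)) ->
  forall n, P n.
Proof.
move=> P0 P1 up down.
have pos (k : nat) : P k /\ P k.+1.
  elim: k => [|k [Pk Pk1]]; first by [].
  split=> //; have := up k.+1.
  have -> : k.+1%:Z - 1 = k by lia.
  have -> : k.+1%:Z + 1 = k.+2 by lia.
  by apply.
have neg (k : nat) : P (- k%:Z) /\ P (1 - k%:Z).
  elim: k => [|k [Pk Pk1]]; first by rewrite subr0.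
  split; last by have -> : 1 - k.+1%:Z = - k%:Z by lia.
  have := down (- k%:Z).
  have -> : - k%:Z + 1 = 1 - k%:Z by lia.
  have -> : - k%:Z - 1 = - k.+1%:Z by lia.
  by apply.
by case=> k; [exact: (pos k).1 | rewrite NegzE; exact: (neg k.+1).1].
Qed.

Lemma int_oddD1 (n : int) : int_odd (n + 1) = ~~ int_odd n.
Proof. rewrite /int_odd; lia. Qed.

Lemma int_oddB1 (n : int) : int_odd (n - 1) = ~~ int_odd n.
Proof. rewrite /int_odd; lia. Qed.

Section OhyamaNonzero.
Variable F : fieldType.

Lemma size_ohyama_lhs (n : int) (p : {poly F}) :
  p != 0 -> size (ohyama_lhs n p) = (2 * size p)%N.
Proof.
move=> p0; rewrite /ohyama_lhs.
set A := _ * p ^+ 2; set B := _ * p^`(2); set C := _ * _ ^+ 2; set D := _ * p^`().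
have sp_gt0 : (0 < size p)%N by rewrite size_poly_gt0.
have sizeA : size A = (2 * size p)%N.
  rewrite /A expr2 size_mul ?mulf_neq0 -?size_poly_gt0 ?size_XaddC // size_mul //.
  (* [size_XaddC] writes its [2] as a ring numeral of [nat], which [lia] does not
     read; below, [set] merges copies of [size p] that [lia] would treat as
     distinct atoms because they are elaborated through different structures. *)
  have -> : 2%R = 2%N :> nat by [].
  set s := size p in sp_gt0 *; lia.
have sd1 := lt_size_deriv p0.
have sd2 : (size p^`(2) <= size p^`())%N.
  rewrite derivSn derivn1; have [->|d0] := eqVneq p^`() 0; first by rewrite deriv0.
  exact/ltnW/lt_size_deriv.
have s2 := size_polyC_leq1 (2%:R : F).
have sX : size ('X : {poly F}) = 2%N := size_polyX F.
have sM := @size_polyMleq F.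
have sB : (size B < 2 * size p)%N.
  have := sM 2%:R%:P 'X; have := sM (2%:R%:P * 'X) p; have := sM (2%:R%:P * 'X * p) p^`(2).
  rewrite -/B; set s := size p in sp_gt0 sd1 *; set s1 := size p^`() in sd1 sd2 *.
  set c := size (2%:P : {poly F}) in s2 *; set x := size ('X : {poly F}) in sX *.
  set a1 := size (2%:P * 'X : {poly F}); set a2 := size (2%:P * 'X * p : {poly F}).
  lia.
have sC : (size C < 2 * size p)%N.
  have := sM 2%:R%:P 'X; have := sM p^`() p^`(); have := sM (2%:R%:P * 'X) (p^`() * p^`()).
  rewrite -/C -expr2; set s := size p in sp_gt0 sd1 *; set s1 := size p^`() in sd1 sd2 *.
  set c := size (2%:P : {poly F}) in s2 *; set x := size ('X : {poly F}) in sX *.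
  set a1 := size (2%:P * 'X : {poly F}); set a2 := size (p^`() ^+ 2 : {poly F}).
  lia.
have sD : (size D < 2 * size p)%N.
  have := sM 2%:R%:P p; have := sM (2%:R%:P * p) p^`().
  rewrite -/D; set s := size p in sp_gt0 sd1 *; set s1 := size p^`() in sd1 sd2 *.
  set c := size (2%:P : {poly F}) in s2 *; set a1 := size (2%:P * p : {poly F}).
  lia.
rewrite /ohyama_lhs -/A -!addrA size_polyDl ?sizeA //.
apply: leq_ltn_trans (size_polyD _ _) _; rewrite size_polyN gtn_max sB /=.
apply: leq_ltn_trans (size_polyD _ _) _; by rewrite size_polyN gtn_max sC.
Qed.

Lemma ohyama_lhs_neq0 n (p : {poly F}) : p != 0 -> ohyama_lhs n p != 0.
Proof. by move=> p0; rewrite -size_poly_gt0 size_ohyama_lhs // muln_gt0 size_poly_gt0. Qed.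

Lemma ohyama_rho_neq0 (rho : int -> {poly F}) : is_ohyama rho -> forall n, rho n != 0.
Proof.
case=> rho0 rho1 _ rec.
have neighbours n : rho n != 0 -> rho (n + 1) != 0 /\ rho (n - 1) != 0.
  move/(ohyama_lhs_neq0 n); rewrite rec.
  by case: int_odd; rewrite !mulf_eq0 !negb_or => /andP[] // _ /andP[].
apply: int_ind2; rewrite ?rho0 ?rho1 ?oner_neq0 //.
  by move=> n _ /neighbours[].
by move=> n /neighbours[].
Qed.

End OhyamaNonzero.

(* [toda t f f' f''] is -f^2 (t (log f)')', whence [toda_mul]; the hypothesis of
   [toda_comp] holds for power maps g = c t^a. *)
Definition toda {K : comNzRingType} (t f f1 f2 : K) : K :=
  t * (f1 ^+ 2 - f * f2) - f * f1.

Section TodaAlgebra.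
Variable K : comNzRingType.

Lemma toda_mul (t f f1 f2 g g1 g2 : K) :
  toda t (f * g) (f1 * g + f * g1) (f2 * g + 2 * (f1 * g1) + f * g2)
  = g ^+ 2 * toda t f f1 f2 + f ^+ 2 * toda t g g1 g2.
Proof. rewrite /toda; ring. Qed.

Lemma toda_comp (t f f1 f2 g g1 g2 : K) : g * (t * g2 + g1) = t * g1 ^+ 2 ->
  g * toda t f (f1 * g1) (f2 * g1 ^+ 2 + f1 * g2) = t * g1 ^+ 2 * toda g f f1 f2.
Proof.
move=> hg; rewrite /toda.
have -> : g * (t * ((f1 * g1) ^+ 2 - f * (f2 * g1 ^+ 2 + f1 * g2)) - f * (f1 * g1))
  = t * g1 ^+ 2 * (g * (f1 ^+ 2 - f * f2)) - f * f1 * (g * (t * g2 + g1)) by ring.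
rewrite hg; ring.
Qed.

End TodaAlgebra.

Lemma horner_ohyama_lhs (F : fieldType) (n : int) (p : {poly F}) (s : F) :
  (ohyama_lhs n p).[s]
  = (s + n%:~R) * p.[s] ^+ 2 + 2 * toda s p.[s] p^`().[s] p^`()^`().[s].
Proof.
rewrite /ohyama_lhs /toda derivSn derivn1.
rewrite !(hornerD, hornerN, hornerM, hornerC, hornerX, horner_exp); ring.
Qed.

Section TodaCalculus.
Variable R : realType.
Implicit Types (f g T U : R -> R) (t : R).

Lemma powRB1 t a : 0 < t -> powR t (a - 1) = powR t a / t.
Proof. by move=> t0; rewrite powRB ?powRr1 ?(ltW t0) // (gt_eqF t0) implybT. Qed.

Lemma derivable1_continuous f t : derivable f t 1 -> {for t, continuous f}.
Proof. by move=> df; apply/differentiable_continuous/derivable1_diffP. Qed.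

Definition has_derive2 f (f1 f2 : R -> R) :=
  forall t, 0 < t -> is_derive t 1 f (f1 t) /\ is_derive t 1 f1 (f2 t).

Lemma has_derive2_mul f f1 f2 g g1 g2 : has_derive2 f f1 f2 -> has_derive2 g g1 g2 ->
  has_derive2 (fun t => f t * g t) (fun t => f1 t * g t + f t * g1 t)
    (fun t => f2 t * g t + 2 * (f1 t * g1 t) + f t * g2 t).
Proof.
move=> df dg t t0; have [df1 df2] := df t t0; have [dg1 dg2] := dg t t0; split.
  by apply: is_derive_eq (is_deriveM df1 dg1) _; rewrite /GRing.scale /=; ring.
apply: is_derive_eq (is_deriveD (is_deriveM df2 dg1) (is_deriveM df1 dg2)) _.
by rewrite /GRing.scale /=; ring.
Qed.

Lemma has_derive2_comp f f1 f2 g g1 g2 :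
  has_derive2 f f1 f2 -> has_derive2 g g1 g2 -> (forall t, 0 < t -> 0 < g t) ->
  has_derive2 (f \o g) (fun t => f1 (g t) * g1 t)
    (fun t => f2 (g t) * g1 t ^+ 2 + f1 (g t) * g2 t).
Proof.
move=> df dg gpos t t0; have [df1 df2] := df _ (gpos t t0); have [dg1 dg2] := dg t t0.
split; first exact: is_derive1_comp.
apply: is_derive_eq (is_deriveM (is_derive1_comp df2 dg1) dg2) _.
by rewrite /GRing.scale /=; ring.
Qed.

Lemma has_derive2_poly (p : {poly R}) :
  has_derive2 (horner p) (horner p^`()) (horner p^`()^`()).
Proof. by move=> t _; split; apply: is_derive_poly. Qed.

Lemma has_derive2_powR (a : R) : has_derive2 (fun t => powR t a) (fun t => a * powR t (a - 1))
  (fun t => a * ((a - 1) * powR t (a - 1 - 1))).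
Proof.
move=> t t0; split; first exact: is_derive1_powR.
exact: is_deriveZ (is_derive1_powR _ t0).
Qed.

Lemma has_derive2_expR_poly (Q : {poly R}) : has_derive2 (fun t => expR Q.[t])
  (fun t => Q^`().[t] * expR Q.[t])
  (fun t => Q^`()^`().[t] * expR Q.[t] + Q^`().[t] * (Q^`().[t] * expR Q.[t])).
Proof.
have dexp t : is_derive t 1 (fun t => expR Q.[t]) (Q^`().[t] * expR Q.[t]).
  by apply: is_derive_eq (is_derive1_comp (is_derive_expR _) (is_derive_poly Q t)) _;
    rewrite mulrC.
move=> t _; split=> //.
apply: is_derive_eq (is_deriveM (is_derive_poly Q^`() t) (dexp t)) _.
by rewrite /GRing.scale /=; ring.
Qed.

Definition has_toda f T :=
  exists f1 f2, has_derive2 f f1 f2 /\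
    forall t, 0 < t -> toda t (f t) (f1 t) (f2 t) = T t.

Lemma has_toda_eq f g T U : has_toda f T ->
  (forall t, 0 < t -> f t = g t) -> (forall t, 0 < t -> T t = U t) -> has_toda g U.
Proof.
move=> [f1 [f2 [df Tf]]] fg TU; exists f1, f2; split=> t t0; last first.
  by rewrite -fg // -TU // Tf.
have [df1 df2] := df t t0; split=> //.
by apply: near_eq_is_derive df1; near=> s; apply: fg; near: s; exact: lt_nbhsr.
Unshelve. all: by end_near. Qed.

Lemma has_toda_derive1 f T t : has_toda f T -> 0 < t ->
  [/\ derivable f t 1, derivable (derive1 f) t 1 &
      toda t (f t) (derive1 f t) (derive1 (derive1 f) t) = T t].
Proof.
move=> [f1 [f2 [df Tf]]] t0; have [df1 df2] := df t t0.
have f1E : \forall s \near t, f1 s = derive1 f s.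
  near=> s; have s0 : 0 < s by near: s; exact: lt_nbhsr.
  by have [dfs _] := df s s0; rewrite derive1E derive_val.
split; first exact: ex_derive.
  by apply: near_eq_derivable f1E _; exact: ex_derive.
by rewrite -Tf // !derive1E -(near_eq_derive _ f1E) !derive_val.
Unshelve. all: by end_near. Qed.

Lemma has_toda_continuous f T t : has_toda f T -> 0 < t -> {for t, continuous f}.
Proof. by move=> fT t0; have [df _ _] := has_toda_derive1 fT t0; exact: derivable1_continuous. Qed.

Lemma has_toda_mul f g T U : has_toda f T -> has_toda g U ->
  has_toda (fun t => f t * g t) (fun t => g t ^+ 2 * T t + f t ^+ 2 * U t).
Proof.
move=> [f1 [f2 [df Tf]]] [g1 [g2 [dg Ug]]].
exists (fun t => f1 t * g t + f t * g1 t),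
  (fun t => f2 t * g t + 2 * (f1 t * g1 t) + f t * g2 t).
by split=> [|t t0]; [exact: has_derive2_mul | rewrite toda_mul Tf ?Ug].
Qed.

Lemma has_toda_comp f T g g1 g2 : has_toda f T -> has_derive2 g g1 g2 ->
  (forall t, 0 < t -> 0 < g t) ->
  (forall t, 0 < t -> g t * (t * g2 t + g1 t) = t * g1 t ^+ 2) ->
  has_toda (f \o g) (fun t => t * g1 t ^+ 2 / g t * T (g t)).
Proof.
move=> [f1 [f2 [df Tf]]] dg gpos gpow.
exists (fun t => f1 (g t) * g1 t), (fun t => f2 (g t) * g1 t ^+ 2 + f1 (g t) * g2 t).
split=> [|t t0]; first exact: has_derive2_comp.
have gt0 : g t != 0 := lt0r_neq0 (gpos t t0).
apply: (mulfI gt0); rewrite /= toda_comp ?gpow // Tf ?gpos //; field; exact: gt0.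
Qed.

Lemma has_toda_cst (k : R) : has_toda (fun=> k) (fun=> 0).
Proof.
exists (fun=> 0), (fun=> 0); split=> [t _|t _]; last by rewrite /toda; ring.
by split; apply: is_derive_cst.
Qed.

Lemma has_toda_powR (a : R) : has_toda (fun t => powR t a) (fun=> 0).
Proof.
exists (fun t => a * powR t (a - 1)), (fun t => a * ((a - 1) * powR t (a - 1 - 1))).
split=> [|t t0]; first exact: has_derive2_powR.
by rewrite /toda !powRB1 //; field; rewrite gt_eqF.
Qed.

Lemma has_toda_poly (p : {poly R}) :
  has_toda (horner p) (fun t => toda t p.[t] p^`().[t] p^`()^`().[t]).
Proof. by exists (horner p^`()), (horner p^`()^`()); split=> //; exact: has_derive2_poly. Qed.

Lemma has_toda_expR_poly (Q : {poly R}) : has_toda (fun t => expR Q.[t])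
  (fun t => - (expR Q.[t] ^+ 2 * (t * Q^`()^`().[t] + Q^`().[t]))).
Proof.
exists (fun t => Q^`().[t] * expR Q.[t]),
  (fun t => Q^`()^`().[t] * expR Q.[t] + Q^`().[t] * (Q^`().[t] * expR Q.[t])).
by split=> [|t _]; [exact: has_derive2_expR_poly | rewrite /toda; ring].
Qed.

End TodaCalculus.

Section Zeta.
Variable R : realType.

Definition zeta (z : R) : R := powR (z / 2) 3^-1.

Lemma zeta_gt0 z : 0 < z -> 0 < zeta z.
Proof. by move=> z0; rewrite powR_gt0 // divr_gt0. Qed.

Lemma zeta_cube z : 0 < z -> zeta z ^+ 3 = z / 2.
Proof.
move=> z0; have z20 : 0 <= z / 2 by rewrite ltW // divr_gt0.
by rewrite -powR_mulrn ?powR_ge0 // -powRrM mulVf ?powRr1 // pnatr_eq0.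
Qed.

Lemma zeta_inj z y : 0 < z -> 0 < y -> zeta z = zeta y -> z = y.
Proof.
move=> z0 y0 /(congr1 (fun x => x ^+ 3)); rewrite !zeta_cube //.
by move/(mulIf _); apply; rewrite invr_eq0 pnatr_eq0.
Qed.

Lemma has_derive2_zeta : has_derive2 zeta
  (fun z => 3^-1 * powR (z / 2) (3^-1 - 1) * 2^-1)
  (fun z => 3^-1 * ((3^-1 - 1) * powR (z / 2) (3^-1 - 1 - 1)) * 2^-1 ^+ 2
            + 3^-1 * powR (z / 2) (3^-1 - 1) * 0).
Proof.
have half : has_derive2 (fun z : R => z / 2) (fun=> 2^-1) (fun=> 0).
  move=> t _; split; last exact: is_derive_cst.
  have -> : (fun z : R => z / 2) = 2^-1 \*: id by apply/funext => z; rewrite /= mulrC.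
  by apply: is_derive_eq (is_deriveZ _ (is_derive_id t 1)) _; rewrite /GRing.scale /= mulr1.
apply: has_derive2_comp (has_derive2_powR _) half _ => z z0.
by rewrite divr_gt0.
Qed.

Lemma has_toda_comp_zeta h T : has_toda h T ->
  has_toda (h \o zeta) (fun z => T (zeta z) / (18 * zeta z ^+ 2)).
Proof.
move=> hT; apply: has_toda_eq; first apply: (has_toda_comp hT has_derive2_zeta zeta_gt0).
all: try done.
all: move=> z z0; have z20 : 0 < z / 2 by rewrite divr_gt0.
all: rewrite !powRB1 // -/(zeta z) -(zeta_cube z0).
all: have zE : z = 2 * zeta z ^+ 3 by rewrite zeta_cube //; field.
all: have zeta0 := lt0r_neq0 (zeta_gt0 z0).
all: set x := zeta z in zE zeta0 *; rewrite zE; field; exact: zeta0.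
Qed.

Lemma zeta_continuous (z : R) : 0 < z -> {for z, continuous zeta}.
Proof.
by move=> z0; have [dz _] := has_derive2_zeta z0; apply: derivable1_continuous; exact: ex_derive.
Qed.

End Zeta.

Section OhyamaSigma.
Variable R : realType.
Variable rho : int -> {poly R}.

Definition prefactor (n : int) (t : R) : R :=
  if int_odd n then powR 3 4^-1 * powR t (7 / 24) else powR t (- (5 / 24)).

Definition ohyama_exponent (n : int) (t : R) : R :=
  - (9 / 8) * t ^+ 4 - (3 / 2) * n%:~R * t ^+ 2.

Definition ohyama_sigma (n : int) (t : R) : R :=
  prefactor n t * expR (ohyama_exponent n t) * (rho n).[3 * t ^+ 2].

Lemma has_toda_prefactor n : has_toda (prefactor n) (fun=> 0).
Proof.
rewrite /prefactor; case: int_odd; last exact: has_toda_powR.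
apply: has_toda_eq (has_toda_mul (has_toda_cst _) (has_toda_powR _)) _ _ => // t _.
by rewrite !mulr0 addr0.
Qed.

Lemma has_toda_expR_ohyama_exponent n :
  has_toda (fun t => expR (ohyama_exponent n t))
    (fun t => 6 * t * (3 * t ^+ 2 + n%:~R) * expR (ohyama_exponent n t) ^+ 2).
Proof.
pose Q : {poly R} := (- (9 / 8))%:P * 'X^4 - ((3 / 2) * n%:~R)%:P * 'X^2.
have QE t : Q.[t] = ohyama_exponent n t.
  by rewrite /Q /ohyama_exponent !hornerE.
apply: has_toda_eq (has_toda_expR_poly Q) _ _ => t _; rewrite ?QE //.
rewrite /Q !poly.derivE.
rewrite !(hornerD, hornerN, hornerM, hornerC, hornerX, hornerXn, hornerMn).
by field.
Qed.

Lemma has_toda_horner_sq (p : {poly R}) : has_toda (fun t => p.[3 * t ^+ 2])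
  (fun t => 12 * t * toda (3 * t ^+ 2) p.[3 * t ^+ 2] p^`().[3 * t ^+ 2] p^`()^`().[3 * t ^+ 2]).
Proof.
pose S : {poly R} := 3%:P * 'X^2.
have SE t : S.[t] = 3 * t ^+ 2 by rewrite /S hornerM hornerC hornerXn.
have S1E t : S^`().[t] = 6 * t.
  by rewrite /S !poly.derivE !(hornerD, hornerM, hornerC, hornerX, hornerMn); ring.
have S2E t : S^`()^`().[t] = 6.
  by rewrite /S !poly.derivE !(hornerD, hornerM, hornerC, hornerX, hornerMn); ring.
apply: has_toda_eq; first apply: (has_toda_comp (has_toda_poly p) (has_derive2_poly S)).
- by move=> t t0; rewrite SE mulr_gt0 // exprn_gt0.
- by move=> t _; rewrite SE S1E S2E; ring.
- by move=> t _; rewrite /= SE.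
- by move=> t t0; rewrite /= SE S1E; field; rewrite gt_eqF.
Qed.

Lemma has_toda_ohyama_sigma n : has_toda (ohyama_sigma n)
  (fun t => 6 * t * (prefactor n t * expR (ohyama_exponent n t)) ^+ 2
            * (ohyama_lhs n (rho n)).[3 * t ^+ 2]).
Proof.
have := has_toda_mul (has_toda_mul (has_toda_prefactor n)
  (has_toda_expR_ohyama_exponent n)) (has_toda_horner_sq (rho n)).
by move/has_toda_eq; apply=> // t _; rewrite horner_ohyama_lhs; ring.
Qed.

Lemma prefactor_gt0 n t : 0 < t -> 0 < prefactor n t.
Proof. by move=> t0; rewrite /prefactor; case: int_odd; rewrite ?mulr_gt0 ?powR_gt0. Qed.

Lemma sqr_powR3_4 : powR 3 4^-1 ^+ 2 = Num.sqrt (3 : R).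
Proof.
rewrite -powR_mulrn ?powR_ge0 // -powRrM -powR12_sqrt //.
by congr powR; field.
Qed.

Lemma prefactorDB1 n t : 0 < t ->
  prefactor (n + 1) t * prefactor (n - 1) t
  = Num.sqrt 3 * prefactor n t ^+ 2 * (if int_odd n then 1 else 3 * t ^+ 2) / (3 * t).
Proof.
move=> t0; have t_neq0 := lt0r_neq0 t0.
have powE : powR t (7 / 24) ^+ 2 = t * powR t (- (5 / 24)) ^+ 2.
  rewrite -!powR_mulrn ?powR_ge0 // -!powRrM -{2}(powRr1 (ltW t0)) -powRD.
    by congr powR; field.
  by rewrite t_neq0 implybT.
have s3 : Num.sqrt (3 : R) * Num.sqrt 3 = 3 by rewrite -expr2 sqr_sqrtr.
rewrite /prefactor int_oddD1 int_oddB1; case: int_odd => /=.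
  rewrite -expr2 exprMn sqr_powR3_4 powE (mulrA (Num.sqrt 3)) s3; field.
  by rewrite t_neq0.
rewrite -expr2 exprMn powE -sqr_powR3_4; field.
by rewrite t_neq0.
Qed.

Lemma expR_ohyama_exponentDB1 n t :
  expR (ohyama_exponent (n + 1) t) * expR (ohyama_exponent (n - 1) t)
  = expR (ohyama_exponent n t) ^+ 2.
Proof.
rewrite -expRD expr2 -expRD /ohyama_exponent; congr expR.
by rewrite rmorphD rmorphB /=; ring.
Qed.

Lemma has_toda_ohyama_sigma_zeta n :
  ohyama_lhs n (rho n) = (if int_odd n then rho (n + 1) * rho (n - 1)
                          else 'X * (rho (n + 1) * rho (n - 1))) ->
  has_toda (fun z => ohyama_sigma n (zeta z))
    (fun z => ohyama_sigma (n + 1) (zeta z) * ohyama_sigma (n - 1) (zeta z) / Num.sqrt 3).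
Proof.
move=> rec; apply: has_toda_eq (has_toda_comp_zeta (has_toda_ohyama_sigma n)) _ _ => // z z0.
have x0 := zeta_gt0 z0; set x := zeta z in x0 *.
have s3 : Num.sqrt (3 : R) != 0 by rewrite sqrtr_eq0 -ltNge.
have regroup (a b c d e f : R) :
  a * b * c * (d * e * f) = a * d * (b * e) * (c * f) by ring.
rewrite /ohyama_sigma regroup prefactorDB1 // expR_ohyama_exponentDB1 rec.
by case: int_odd; rewrite !hornerM ?hornerX; field; rewrite s3 lt0r_neq0.
Qed.

Lemma ohyama_sigma_neq0 n t : 0 < t -> (rho n).[3 * t ^+ 2] != 0 -> ohyama_sigma n t != 0.
Proof.
move=> t0 rn; rewrite /ohyama_sigma !mulf_neq0 //.
  exact: lt0r_neq0 (prefactor_gt0 n t0).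
exact: lt0r_neq0 (expR_gt0 _).
Qed.

End OhyamaSigma.

Section PuncturedNeighbourhoods.
Variable R : realType.

Lemma eq_of_punctured_nbhs (f g : R -> R) y :
  {for y, continuous f} -> {for y, continuous g} ->
  (\forall x \near y, x != y -> f x = g x) -> f y = g y.
Proof.
move=> cf cg fg; have fg' : \forall x \near dnbhs y, f x = g x := fg.
have gf : (g @ dnbhs y --> f y)%classic.
  by apply: cvg_trans ((continuous_withinNx f y).1 cf); exact: near_eq_cvg.
exact: cvg_unique gf ((continuous_withinNx g y).1 cg).
Qed.

Lemma near_horner_neq0 (W : {poly R}) (phi : R -> R) y : W != 0 ->
  {for y, continuous phi} -> (\forall x \near y, phi x = phi y -> x = y) ->
  \forall x \near y, x != y -> W.[phi x] != 0.
Proof.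
move=> W0 cphi phi_inj.
have [m [r r0 Wr]] := multiplicity_XsubC W (phi y); rewrite W0 /= in r0.
have cr : {for y, continuous (fun x => r.[phi x])}.
  exact: continuous_comp cphi (@continuous_horner R r (phi y)).
have rn := cvgr_neq0 _ cr r0.
near=> x => xy; rewrite Wr hornerM mulf_neq0 //; first by near: x; exact: rn.
rewrite horner_exp !hornerE expf_neq0 // subr_eq0.
by apply: contra xy => /eqP /(near phi_inj x) ->.
Unshelve. all: by end_near. Qed.

End PuncturedNeighbourhoods.

Section OhyamaRecurrence.
Variables (R : realType) (rho : int -> {poly R}) (sigma : int -> R -> R).
Hypothesis rho_ohyama : is_ohyama rho.
Hypothesis sigma_toda : forall n z, 0 < z ->
  [/\ derivable (sigma n) z 1, derivable (derive1 (sigma n)) z 1 &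
      sigma (n + 1) z * sigma (n - 1) z
      = Num.sqrt 3 * toda z (sigma n z) (derive1 (sigma n) z) (derive1 (derive1 (sigma n)) z)].

Local Notation sigma_eq n := (forall z, 0 < z -> sigma n z = ohyama_sigma rho n (zeta z)).

Lemma sigma_mulDB1 n : sigma_eq n -> forall z, 0 < z ->
  sigma (n + 1) z * sigma (n - 1) z
  = ohyama_sigma rho (n + 1) (zeta z) * ohyama_sigma rho (n - 1) (zeta z).
Proof.
move=> sn z z0; have [_ _ _ rec] := rho_ohyama.
have sigma_n_toda : has_toda (sigma n) (fun z =>
    ohyama_sigma rho (n + 1) (zeta z) * ohyama_sigma rho (n - 1) (zeta z) / Num.sqrt 3).
  by apply: has_toda_eq (has_toda_ohyama_sigma_zeta (rec n)) _ _ => // t t0; rewrite sn.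
have [_ _ todaE] := has_toda_derive1 sigma_n_toda z0.
have [_ _ ->] := sigma_toda n z0; rewrite todaE mulrC divfK //.
Qed.

Lemma sigma_eq_cancel m o : sigma_eq o ->
  (forall z, 0 < z -> sigma m z * sigma o z
                      = ohyama_sigma rho m (zeta z) * ohyama_sigma rho o (zeta z)) ->
  sigma_eq m.
Proof.
move=> so prod z z0; have [dm _ _] := sigma_toda m z0.
apply: (eq_of_punctured_nbhs (g := fun x => ohyama_sigma rho m (zeta x))).
  exact: derivable1_continuous.
  exact: has_toda_continuous (has_toda_comp_zeta (has_toda_ohyama_sigma rho m)) z0.
pose S : {poly R} := 3%:P * 'X^2.
have SE x : S.[x] = 3 * x ^+ 2 by rewrite /S hornerM hornerC hornerXn.
have phi_cont : {for z, continuous (horner S \o @zeta R)}.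
  exact: continuous_comp (zeta_continuous z0) (@continuous_horner R S _).
have phi_inj : \forall x \near z, S.[zeta x] = S.[zeta z] -> x = z.
  near=> x; have x0 : 0 < x by near: x; exact: lt_nbhsr.
  have n3 : (3 : R) != 0 by rewrite pnatr_eq0.
  rewrite !SE => /(mulfI n3)/eqP; rewrite eqrXn2 ?ltW ?zeta_gt0 // => /eqP.
  exact: zeta_inj.
have rho_o := ohyama_rho_neq0 rho_ohyama o.
have rho_o_neq0 := near_horner_neq0 rho_o phi_cont phi_inj.
near=> x => xz; have x0 : 0 < x by near: x; exact: lt_nbhsr.
have rx : (rho o).[S.[zeta x]] != 0 by move: xz; near: x; exact: rho_o_neq0.
have so_neq0 : ohyama_sigma rho o (zeta x) != 0.
  by apply: ohyama_sigma_neq0 (zeta_gt0 x0) _; rewrite -SE.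
by apply: (mulIf so_neq0); rewrite -{1}so // prod.
Unshelve. all: by end_near. Qed.

End OhyamaRecurrence.

Theorem mainTheorem7 (R : realType) (rho : int -> {poly R})
  (sigma : int -> R -> R) :
  is_ohyama rho ->
  (forall n : int, forall z : R, 0 < z ->
     [/\ derivable (sigma n) z 1,
         derivable (derive1 (sigma n)) z 1 &
         sigma (n + 1) z * sigma (n - 1) z =
           Num.sqrt 3 *
           (z * ((derive1 (sigma n) z) ^+ 2
                 - sigma n z * derive1 (derive1 (sigma n)) z)
            - sigma n z * derive1 (sigma n) z)]) ->
  (forall z : R, 0 < z ->
     let zeta := powR (z / 2) (3^-1) in
     sigma 0 z = powR zeta (- (5 / 24)) * expR (- (9 / 8) * zeta ^+ 4)) ->
  (forall z : R, 0 < z ->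
     let zeta := powR (z / 2) (3^-1) in
     sigma 1 z = powR 3 (4^-1) * powR zeta (7 / 24)
                 * expR (- (9 / 8) * zeta ^+ 4 - (3 / 2) * zeta ^+ 2)) ->
  forall (n : int) (z : R), 0 < z ->
    let zeta := powR (z / 2) (3^-1) in
    sigma n z =
      if int_odd n then
        powR 3 (4^-1) * powR zeta (7 / 24)
        * expR (- (9 / 8) * zeta ^+ 4 - (3 / 2) * n%:~R * zeta ^+ 2)
        * (rho n).[3 * zeta ^+ 2]
      else
        powR zeta (- (5 / 24))
        * expR (- (9 / 8) * zeta ^+ 4 - (3 / 2) * n%:~R * zeta ^+ 2)
        * (rho n).[3 * zeta ^+ 2].
Proof.
move=> rho_ohyama sigma_toda sigma0 sigma1.
have [rho0 rho1 _ _] := rho_ohyama.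
suff sigmaE n z : 0 < z -> sigma n z = ohyama_sigma rho n (zeta z).
  by move=> n z z0 /=; rewrite sigmaE // /ohyama_sigma /prefactor /ohyama_exponent; case: int_odd.
have cancel := sigma_eq_cancel rho_ohyama sigma_toda.
have mulDB1 := sigma_mulDB1 rho_ohyama sigma_toda.
move: n z; apply: int_ind2.
- move=> z z0; rewrite sigma0 // /ohyama_sigma /prefactor /ohyama_exponent /= rho0 hornerC.
  by rewrite mulr1 mulr0 mul0r subr0.
- by move=> z z0; rewrite sigma1 // /ohyama_sigma /prefactor /ohyama_exponent /= rho1 hornerC mulr1z !mulr1.
- by move=> n sB sn; apply: cancel sB _; exact: mulDB1 sn.
- move=> n sn sD; apply: cancel sD _ => z z0.
  by rewrite mulrC [RHS]mulrC; exact: mulDB1 sn z z0.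
Qed.
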